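(* Let $T$ be a theory over a first-order signature $(\Sigma,\Pi)$ whose declarations are all on standard form, over a variable system with the de Bruijn property. Let $F:\mathcal F_\Sigma\to\mathcal C$ be a cwf morphism, $\mathcal D$ a first-order hyperdoctrine over $\mathcal C$, and $G,G':\mathcal H_{\Sigma,\Pi,T}\to\mathcal D$ two $F$-based hyperdoctrine morphisms. If $G_\Gamma(\Gamma,R(\mathrm{OV}(\Gamma)))=G'_\Gamma(\Gamma,R(\mathrm{OV}(\Gamma)))$ in $\mathrm{Pr}^{\mathcal D}(F(\Gamma))$ for every $(\Gamma,R)\in\Pi$, then $G=G'$ (i.e. $G_\Delta(P)=G'_\Delta(P)$ for all objects $\Delta$ of $\mathcal F_\Sigma$ and all $P\in\mathrm{Pr}_{\Sigma,\Pi,T}(\Delta)$).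
   Context: Type system: fix an infinite set $V$ of variables with decidable equality and a fresh variable provider: functions $\varphi,\mathsf{fr}$ assigning to each finite $X\subseteq V$ an inhabited $\varphi(X)\subseteq V\setminus X$ and $\mathsf{fr}(X)\in\varphi(X)$; de Bruijn property: $\varphi(X)=\{\mathsf{fr}(X)\}$. Disjoint sets $F$ (function symbols), $T$ (type symbols). Preelements: terms from variables and $F$; pretypes $S(t_1,\ldots,t_n)$, $S\in T$. $\mathrm V(E)$: variables of $E$; $E[\bar a/\bar x]$: simultaneous substitution. Precontext $\Gamma=x_1:A_1,\ldots,x_n:A_n$ with $x_k\in\varphi(\{x_1,\ldots,x_{k-1}\})$, $\mathrm V(A_k)\subseteq\{x_1,\ldots,x_{k-1}\}$; $\mathrm{OV}(\Gamma)=x_1,\ldots,x_n$; $\mathrm{Fresh}(\Gamma)=\varphi(\mathrm V(\Gamma))$, $\mathrm{fresh}(\Gamma)=\mathsf{fr}(\mathrm V(\Gamma))$; $E[\bar a/\Gamma]=E[\bar a/x_1,\ldots,x_n]$. Top variables $\mathrm{TV}(\langle\rangle)=\emptyset$, $\mathrm{TV}(\Gamma,x:A)=(\mathrm{TV}(\Gamma)\setminus\mathrm V(A))\cup\{x\}$; a determining sequence is a strictly increasing $\bar i=i_1,\ldots,i_k$ with $\mathrm{TV}(\Gamma)\subseteq\{x_{i_1},\ldots,x_{i_k}\}$, $\bar a_{\bar i}=a_{i_1},\ldots,a_{i_k}$; a declaration is on standard form if $\bar i=1,\ldots,n$ (then $\bar i$ is omitted). Declarations $(\Gamma,S,\bar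 i)$ and $(\Gamma,f,\bar i,U)$ ($\mathrm V(U)\subseteq\mathrm V(\Gamma)$), each symbol at most once. $\mathcal J(\Sigma)$: smallest set of judgements closed under (R1) $\langle\rangle$ context; (R2) $\Gamma$ context, $A$ type $(\Gamma)$ $\Rightarrow$ $\Gamma,x:A$ context ($x\in\mathrm{Fresh}(\Gamma)$); (R3) $x_1:A_1,\ldots,x_n:A_n$ context $\Rightarrow$ $x_i:A_i\ (x_1:A_1,\ldots,x_n:A_n)$; (R4) $(\Gamma,S,\bar i)\in\Sigma$, $\bar a:\Delta\to\Gamma$ $\Rightarrow$ $S(\bar a_{\bar i})$ type $(\Delta)$; (R5) $(\Gamma,f,\bar i,U)\in\Sigma$, $\bar a:\Delta\to\Gamma$, $U[\bar a/\Gamma]$ type $(\Delta)$ $\Rightarrow$ $f(\bar a_{\bar i}):U[\bar a/\Gamma]\ (\Delta)$; where ''$\bar a:\Delta\to\Gamma$'' abbreviates $\Delta$ context, $\Gamma$ context, $a_k:A_k[a_1,\ldots,a_{k-1}/x_1,\ldots,x_{k-1}]\ (\Delta)$. $\Sigma$ is a signature if declared contexts are contexts and declared $U$ are types in $\mathcal J(\Sigma)$. Cwf: a category $\mathcal C$ with terminal object; classes $\mathrm{Ty}(\Gamma)$ with functorial substitution $A\{f\}$; context extension $\Gamma.A$ with $\mathrm p(A):\Gamma.A\to\Gamma$; classes $\mathrm{Tm}(\Gamma,A)$ with functorial $a\{f\}\in\mathrm{Tm}(\Delta,A\{f\})$; $\mathrm v_A\in\mathrm{Tm}(\Gamma.A,A\{\mathrm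 p(A)\})$; $\langle f,a\rangle_A:\Delta\to\Gamma.A$ for $a\in\mathrm{Tm}(\Delta,A\{f\})$ with $\mathrm p(A)\langle f,a\rangle_A=f$, $\mathrm v_A\{\langle f,a\rangle_A\}=a$, $\langle\mathrm p(A)h,\mathrm v_A\{h\}\rangle_A=h$, $\langle f,a\rangle_A g=\langle fg,a\{g\}\rangle_A$; $f.A=\langle f\circ\mathrm p(A\{f\}),\mathrm v_{A\{f\}}\rangle_A:\Delta.A\{f\}\to\Gamma.A$. A cwf morphism $(F,\sigma,\theta):\mathcal C\to\mathcal C'$: a functor $F$ preserving the terminal object, $\sigma_\Gamma:\mathrm{Ty}(\Gamma)\to\mathrm{Ty}'(F\Gamma)$ with $\sigma_\Delta(A\{f\})=\sigma_\Gamma(A)\{Ff\}$, $F(\Gamma.A)=F\Gamma.\sigma_\Gamma(A)$, $F(\mathrm p(A))=\mathrm p(\sigma_\Gamma(A))$, and $\theta_{\Gamma,A}:\mathrm{Tm}(\Gamma,A)\to\mathrm{Tm}'(F\Gamma,\sigma_\Gamma(A))$ commuting with substitution, with $\theta(\mathrm v_A)=\mathrm v_{\sigma_\Gamma(A)}$ and $F\langle f,a\rangle_A=\langle Ff,\theta(a)\rangle_{\sigma_\Gamma(A)}$. The cwf $\mathcal F_\Sigma$: objects are contexts $\Gamma$ (i.e. ($\Gamma$ context)$\in\mathcal J(\Sigma)$); morphisms $(\Delta,\Gamma,\bar a)$ with $\bar a:\Delta\to\Gamma$ in $\mathcal J(\Sigma)$, composed by substitution, identity $(\Gamma,\Gamma,\mathrm{OV}(\Gamma))$;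 $\mathrm{Ty}(\Gamma)=\{(\Gamma,A):(A\text{ type }(\Gamma))\in\mathcal J(\Sigma)\}$, $(\Gamma,A)\{(\Delta,\Gamma,\bar a)\}=(\Delta,A[\bar a/\Gamma])$; $\mathrm{Tm}(\Gamma,(\Gamma,A))=\{((\Gamma,A),a):(a:A\ (\Gamma))\in\mathcal J(\Sigma)\}$; $\Gamma.(\Gamma,S)=\langle\Gamma,\mathrm{fresh}(\Gamma):S\rangle$, $\mathrm p=(\Gamma.(\Gamma,S),\Gamma,\mathrm{OV}(\Gamma))$, $\mathrm v=((\Gamma.(\Gamma,S),S),\mathrm{fresh}(\Gamma))$, $\langle(\Delta,\Gamma,\bar s),((\Delta,S[\bar s/\Gamma]),b)\rangle=(\Delta,\Gamma.(\Gamma,S),(\bar s,b))$. Heyting (pre)algebra: a preorder $\le$ (not necessarily antisymmetric) with $\top,\bot,\wedge,\vee,\to$ satisfying $\bot\le x\le\top$, $z\le x\wedge y$ iff $z\le x$ and $z\le y$, $x\vee y\le z$ iff $x\le z$ and $y\le z$, $z\le(x\to y)$ iff $z\wedge x\le y$; morphisms are monotone maps preserving the operations and constants. A first-order hyperdoctrine over a cwf $\mathcal C$ is $(\mathcal C,\mathrm{Pr},\forall,\exists)$ with $\mathrm{Pr}:\mathcal C^{\mathrm{op}}\to\mathrm{Heyting}$ a functor ($R\{f\}=\mathrm{Pr}(f)(R)$) and, for $S\in\mathrm{Ty}(\Gamma)$, monotone $\forall_S,\exists_S:\mathrm{Pr}(\Gamma.S)\to\mathrm{Pr}(\Gamma)$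 with $Q\le\forall_S(R)$ iff $Q\{\mathrm p(S)\}\le R$, and $\exists_S(R)\le Q$ iff $R\le Q\{\mathrm p(S)\}$ ($Q\in\mathrm{Pr}(\Gamma)$, $R\in\mathrm{Pr}(\Gamma.S)$), and for $f:\Delta\to\Gamma$: $\forall_S(R)\{f\}=\forall_{S\{f\}}(R\{f.S\})$, $\exists_S(R)\{f\}=\exists_{S\{f\}}(R\{f.S\})$. Given a cwf morphism $F=(F,\sigma,\theta):\mathcal C\to\mathcal C'$ and hyperdoctrines $\mathcal H=(\mathcal C,\mathrm{Pr},\forall,\exists)$, $\mathcal H'=(\mathcal C',\mathrm{Pr}',\forall',\exists')$, an $F$-based morphism $G:\mathcal H\to\mathcal H'$ is a family of Heyting morphisms $G_\Gamma:\mathrm{Pr}(\Gamma)\to\mathrm{Pr}'(F\Gamma)$ with $G_\Delta(R\{f\})=G_\Gamma(R)\{Ff\}$ for $f:\Delta\to\Gamma$, $G_\Gamma(\forall_S R)=\forall'_{\sigma_\Gamma(S)}(G_{\Gamma.S}R)$ and $G_\Gamma(\exists_S R)=\exists'_{\sigma_\Gamma(S)}(G_{\Gamma.S}R)$. Logic: predicate symbols from a set $P$ disjoint from $F\cup T$; a predicate declaration is $(\Gamma,\bar i,R)$ with ($\Gamma$ context)$\in\mathcal J(\Sigma)$, $\bar i$ determining, $R\in P$ (written $(\Gamma,R)$ on standard form); a predicate signature $\Pi$ declares each symbol at most once. $\mathrm{Form}(\Sigma,\Pi)$ is the smallest set of judgements ''$\phi$ form $(\Gamma)$'' with: $R(\bar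 a_{\bar i})$ form $(\Delta)$ for $(\Gamma,\bar i,R)\in\Pi$ and $\bar a:\Delta\to\Gamma$ in $\mathcal J(\Sigma)$; $\bot,\top$ form $(\Gamma)$ for contexts $\Gamma$; $(\phi\circ\psi)$ form $(\Gamma)$ for $\circ\in\{\wedge,\vee,\to\}$ from $\phi,\psi$ form $(\Gamma)$; $(Qx:A)\phi$ form $(\Gamma)$ for $Q\in\{\forall,\exists\}$ from $\phi$ form $(\Gamma,x:A)$ (with $(A\text{ type }(\Gamma))\in\mathcal J(\Sigma)$). Capture-avoiding substitution for $\bar a:\Delta\to\Gamma$: $\phi\{(\Delta,\Gamma,\bar a)\}=\phi[\bar a/\Gamma]$ for atomic $\phi$; it commutes with $\top,\bot,\wedge,\vee,\to$; and $((Qx:A)\theta)\{(\Delta,\Gamma,\bar a)\}=(Qy:A[\bar a/\Gamma])\,\theta\{(\langle\Delta,y:A[\bar a/\Gamma]\rangle,\langle\Gamma,x:A\rangle,(\bar a,y))\}$ with $y=\mathrm{fresh}(\Delta)$. A sequent is $\phi\Rightarrow_\Gamma\psi$ with $\phi,\psi$ form $(\Gamma)$; a theory is a set of sequents. Write $\mathbf p_\Gamma(x:A)=(\langle\Gamma,x:A\rangle,\Gamma,\mathrm{OV}(\Gamma))$. $\mathrm{Thm}(\Sigma,\Pi,T)$ is the smallest set of sequents containing $T$ and closed under: $\phi\Rightarrow_\Gamma\phi$; cut; $\theta\wedge\psi\Rightarrow_\Gamma\theta$, $\theta\wedge\psi\Rightarrow_\Gamma\psi$, from $\phi\Rightarrow_\Gamma\theta$,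 $\phi\Rightarrow_\Gamma\psi$ infer $\phi\Rightarrow_\Gamma\theta\wedge\psi$, $\phi\Rightarrow_\Gamma\top$; $\theta\Rightarrow_\Gamma\theta\vee\psi$, $\psi\Rightarrow_\Gamma\theta\vee\psi$, from $\theta\Rightarrow_\Gamma\phi$, $\psi\Rightarrow_\Gamma\phi$ infer $\theta\vee\psi\Rightarrow_\Gamma\phi$, $\bot\Rightarrow_\Gamma\phi$; $\theta\wedge\psi\Rightarrow_\Gamma\phi$ iff $\theta\Rightarrow_\Gamma\psi\to\phi$; $\phi\{\mathbf p_\Gamma(x:A)\}\Rightarrow_{\Gamma,x:A}\psi$ iff $\phi\Rightarrow_\Gamma(\forall x:A)\psi$; $\psi\Rightarrow_{\Gamma,x:A}\phi\{\mathbf p_\Gamma(x:A)\}$ iff $(\exists x:A)\psi\Rightarrow_\Gamma\phi$ (each ''iff'' read as two rules); and substitution: from $\phi\Rightarrow_\Gamma\psi$ and $\bar a:\Delta\to\Gamma$ infer $\phi\{(\Delta,\Gamma,\bar a)\}\Rightarrow_\Delta\psi\{(\Delta,\Gamma,\bar a)\}$. Lindenbaum–Tarski hyperdoctrine $\mathcal H_{\Sigma,\Pi,T}=(\mathcal F_\Sigma,\mathrm{Pr}_{\Sigma,\Pi,T},\forall,\exists)$: $\mathrm{Pr}_{\Sigma,\Pi,T}(\Gamma)=\{(\Gamma,\phi):(\phi\text{ form }(\Gamma))\in\mathrm{Form}(\Sigma,\Pi)\}$ ordered by $(\Gamma,\phi)\le(\Gamma,\psi)$ iff $(\phi\Rightarrow_\Gamma\psi)\in\mathrm{Thm}(\Sigma,\Pi,T)$,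 Heyting operations given by the connectives; $\mathrm{Pr}((\Delta,\Gamma,\bar a))(\Gamma,\phi)=(\Delta,\phi\{(\Delta,\Gamma,\bar a)\})$; $\forall_{(\Gamma,A)}(\langle\Gamma,x:A\rangle,\psi)=(\Gamma,(\forall x:A)\psi)$, $\exists_{(\Gamma,A)}(\langle\Gamma,x:A\rangle,\psi)=(\Gamma,(\exists x:A)\psi)$. *)

From HB Require Import structures.
From mathcomp Require Import all_boot.
Set Implicit Arguments. Unset Strict Implicit. Unset Printing Implicit Defensive.

(* Finite subsets of V are represented by lists; fr must only depend on the *)
(* underlying set (lfr_ext).  De Bruijn property: phi(X) = {fr(X)}, so the   *)
(* system is entirely determined by fr; fr(X) is not in X (this also makes  *)
(* V infinite).  F, T, P are disjoint since they are distinct types.        *)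
Record lang := Lang {
  lV : eqType;
  lfr : seq lV -> lV;
  lfr_fresh : forall X : seq lV, lfr X \notin X;
  lfr_ext : forall X Y : seq lV, X =i Y -> lfr X = lfr Y;
  lF : Type;
  lT : Type;
  lP : Type }.

Section Syntax.
Variable L : lang.

Inductive term : Type :=
| Var of lV L
| App of lF L & seq term.

Definition pty := (lT L * seq term)%type.

(* precontexts x1:A1,...,xn:An  (head of the list = x1) *)
Definition ctx := seq (lV L * pty).

Fixpoint tvars (t : term) : seq (lV L) :=
  match t with
  | Var v => [:: v]
  | App _ ts => flatten (map tvars ts)
  end.

Definition tyvars (A : pty) : seq (lV L) := flatten (map tvars A.2).

Definition OV (G : ctx) : seq (lV L) := map fst G.

Definition ctxvars (G : ctx) : seq (lV L) :=
  flatten [seq p.1 :: tyvars p.2 | p <- G].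

Definition fresh (G : ctx) : lV L := lfr (ctxvars G).

Fixpoint tsubst (s : lV L -> term) (t : term) : term :=
  match t with
  | Var v => s v
  | App f ts => App f (map (tsubst s) ts)
  end.

Definition sub_of (xs : seq (lV L)) (as_ : seq term) (v : lV L) : term :=
  if v \in xs then nth (Var v) as_ (index v xs) else Var v.

Definition tm_sub (G : ctx) (as_ : seq term) (t : term) : term :=
  tsubst (sub_of (OV G) as_) t.
Definition ty_sub (G : ctx) (as_ : seq term) (A : pty) : pty :=
  (A.1, map (tm_sub G as_) A.2).
Definition seq_sub (G : ctx) (as_ bs : seq term) : seq term :=
  map (tm_sub G as_) bs.

(* a_{i} for a sequence of (0-based) indices i *)
Definition sel (as_ : seq term) (idx : seq nat) : seq term :=
  [seq nth (Var (lfr [::])) as_ i | i <- idx].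

Definition TV (G : ctx) : seq (lV L) :=
  foldl (fun acc (p : lV L * pty) => p.1 :: [seq y <- acc | y \notin tyvars p.2])
        [::] G.

(* determining sequence (0-based indices, strictly increasing) *)
Definition determining (G : ctx) (idx : seq nat) : Prop :=
  sorted ltn idx /\ all (fun i => i < size G) idx /\
  {subset TV G <= [seq nth (lfr [::]) (OV G) i | i <- idx]}.

Definition standard (G : ctx) (idx : seq nat) : Prop := idx = iota 0 (size G).

(* a set of declarations, each symbol declared at most once:
   partial maps from symbols to their (unique) declaration *)
Record sig := Sig {
  sT : lT L -> option (ctx * seq nat);            (* (Gamma, S, i) *)
  sF : lF L -> option (ctx * seq nat * pty) }.    (* (Gamma, f, i, U) *)

Inductive form : Type :=
| FAtom of lP L & seq term
| FBot
| FTop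
| FAnd of form & form
| FOr of form & form
| FImp of form & form
| FAll of lV L & pty & form
| FEx of lV L & pty & form.

Definition psig := lP L -> option (ctx * seq nat).

Fixpoint fsub (D G : ctx) (as_ : seq term) (phi : form) : form :=
  match phi with
  | FAtom R ts => FAtom R (seq_sub G as_ ts)
  | FBot => FBot
  | FTop => FTop
  | FAnd a b => FAnd (fsub D G as_ a) (fsub D G as_ b)
  | FOr a b => FOr (fsub D G as_ a) (fsub D G as_ b)
  | FImp a b => FImp (fsub D G as_ a) (fsub D G as_ b)
  | FAll x A th =>
      let y := fresh D in let B := ty_sub G as_ A in
      FAll y B (fsub (rcons D (y, B)) (rcons G (x, A)) (rcons as_ (Var y)) th)
  | FEx x A th =>
      let y := fresh D in let B := ty_sub G as_ A in
      FEx y B (fsub (rcons D (y, B)) (rcons G (x, A)) (rcons as_ (Var y)) th)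
  end.

End Syntax.

Arguments Var {L}.
Arguments FBot {L}.
Arguments FTop {L}.

Section Judgements.
Variable L : lang.
Variable Sg : sig L.

Inductive ctxJ : ctx L -> Prop :=
| R1 : ctxJ [::]
| R2 (G : ctx L) (A : pty L) :
    ctxJ G -> tyJ G A -> ctxJ (rcons G (fresh G, A))
with tyJ : ctx L -> pty L -> Prop :=
| R4 (G : ctx L) (S : lT L) (idx : seq nat) (D : ctx L) (as_ : seq (term L)) :
    sT Sg S = Some (G, idx) -> substJ D G as_ -> tyJ D (S, sel as_ idx)
with tmJ : ctx L -> term L -> pty L -> Prop :=
| R3 (G1 G2 : ctx L) (x : lV L) (A : pty L) :
    ctxJ (G1 ++ (x, A) :: G2) -> tmJ (G1 ++ (x, A) :: G2) (Var x) A
| R5 (G : ctx L) (f : lF L) (idx : seq nat) (U : pty L) (D : ctx L)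
     (as_ : seq (term L)) :
    sF Sg f = Some (G, idx, U) -> substJ D G as_ ->
    tyJ D (ty_sub G as_ U) -> tmJ D (App f (sel as_ idx)) (ty_sub G as_ U)
with substJ : ctx L -> ctx L -> seq (term L) -> Prop :=
| SubstJ (D G : ctx L) (as_ : seq (term L)) :
    ctxJ D -> ctxJ G -> size as_ = size G ->
    (forall (G1 G2 : ctx L) (x : lV L) (A : pty L) (bs cs : seq (term L)) (a : term L),
        G = G1 ++ (x, A) :: G2 -> as_ = bs ++ a :: cs -> size bs = size G1 ->
        tmJ D a (ty_sub G1 bs A)) ->
    substJ D G as_.

Definition is_signature : Prop :=
  (forall S G idx, sT Sg S = Some (G, idx) -> ctxJ G /\ determining G idx) /\
  (forall f G idx U, sF Sg f = Some (G, idx, U) ->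
     ctxJ G /\ determining G idx /\ {subset tyvars U <= ctxvars G} /\ tyJ G U).

Variable Pi : psig L.

Definition is_psig : Prop :=
  forall R G idx, Pi R = Some (G, idx) -> ctxJ G /\ determining G idx.

Inductive formJ : ctx L -> form L -> Prop :=
| FJatom (G : ctx L) (idx : seq nat) (R : lP L) (D : ctx L) (as_ : seq (term L)) :
    Pi R = Some (G, idx) -> substJ D G as_ -> formJ D (FAtom R (sel as_ idx))
| FJbot G : ctxJ G -> formJ G FBot
| FJtop G : ctxJ G -> formJ G FTop
| FJand G a b : formJ G a -> formJ G b -> formJ G (FAnd a b)
| FJor G a b : formJ G a -> formJ G b -> formJ G (FOr a b)
| FJimp G a b : formJ G a -> formJ G b -> formJ G (FImp a b)
| FJall G x A phi : tyJ G A -> x = fresh G -> formJ (rcons G (x, A)) phi ->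
    formJ G (FAll x A phi)
| FJex G x A phi : tyJ G A -> x = fresh G -> formJ (rcons G (x, A)) phi ->
    formJ G (FEx x A phi).

Definition seqJ (G : ctx L) (phi psi : form L) : Prop := formJ G phi /\ formJ G psi.

Definition is_theory (Th : ctx L -> form L -> form L -> Prop) : Prop :=
  forall G phi psi, Th G phi psi -> seqJ G phi psi.

Definition wk (G : ctx L) (x : lV L) (A : pty L) (phi : form L) : form L :=
  fsub (rcons G (x, A)) G (map Var (OV G)) phi.

Variable Th : ctx L -> form L -> form L -> Prop.

(* Thm(Sigma, Pi, T): smallest set of sequents containing T and closed under
   the rules; each rule carries the proviso that its conclusion is a sequent *)
Inductive thm : ctx L -> form L -> form L -> Prop :=
| Tax G phi psi : Th G phi psi -> thm G phi psi
| Tid G phi : seqJ G phi phi -> thm G phi phi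
| Tcut G phi th psi : seqJ G phi psi -> thm G phi th -> thm G th psi -> thm G phi psi
| TandE1 G th psi : seqJ G (FAnd th psi) th -> thm G (FAnd th psi) th
| TandE2 G th psi : seqJ G (FAnd th psi) psi -> thm G (FAnd th psi) psi
| TandI G phi th psi : seqJ G phi (FAnd th psi) ->
    thm G phi th -> thm G phi psi -> thm G phi (FAnd th psi)
| Ttop G phi : seqJ G phi FTop -> thm G phi FTop
| TorI1 G th psi : seqJ G th (FOr th psi) -> thm G th (FOr th psi)
| TorI2 G th psi : seqJ G psi (FOr th psi) -> thm G psi (FOr th psi)
| TorE G th psi phi : seqJ G (FOr th psi) phi ->
    thm G th phi -> thm G psi phi -> thm G (FOr th psi) phi
| Tbot G phi : seqJ G FBot phi -> thm G FBot phi
| TimpI G th psi phi : seqJ G th (FImp psi phi) ->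
    thm G (FAnd th psi) phi -> thm G th (FImp psi phi)
| TimpE G th psi phi : seqJ G (FAnd th psi) phi ->
    thm G th (FImp psi phi) -> thm G (FAnd th psi) phi
| TallI G x A phi psi : seqJ G phi (FAll x A psi) ->
    thm (rcons G (x, A)) (wk G x A phi) psi -> thm G phi (FAll x A psi)
| TallE G x A phi psi : seqJ (rcons G (x, A)) (wk G x A phi) psi ->
    thm G phi (FAll x A psi) -> thm (rcons G (x, A)) (wk G x A phi) psi
| TexI G x A phi psi : seqJ G (FEx x A psi) phi ->
    thm (rcons G (x, A)) psi (wk G x A phi) -> thm G (FEx x A psi) phi
| TexE G x A phi psi : seqJ (rcons G (x, A)) psi (wk G x A phi) ->
    thm G (FEx x A psi) phi -> thm (rcons G (x, A)) psi (wk G x A phi)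
| Tsub G D as_ phi psi : seqJ D (fsub D G as_ phi) (fsub D G as_ psi) ->
    thm G phi psi -> substJ D G as_ -> thm D (fsub D G as_ phi) (fsub D G as_ psi).

End Judgements.

(* Categories with families, presented with ambient carrier types and       *)
(* membership predicates: Ob = {G | isOb G}, Hom(D,G) = {f | isHom D G f},  *)
(* Ty(G) = {A | isTy G A}, Tm(G,A) = {a | isTm G A a}.  The operations are  *)
(* total on the ambient types; all laws are required on members only.      *)
Record cwf := Cwf {
  ob : Type;
  isOb : ob -> Prop;
  hom : Type;
  isHom : ob -> ob -> hom -> Prop;
  comp : hom -> hom -> hom;                 (* comp g f = g o f *)
  idm : ob -> hom;
  one : ob;
  ty : Type;
  isTy : ob -> ty -> Prop;
  tsub : ty -> hom -> ty;
  ext : ob -> ty -> ob;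
  pp : ob -> ty -> hom;
  tm : Type;
  isTm : ob -> ty -> tm -> Prop;
  msub : tm -> hom -> tm;
  vv : ob -> ty -> tm;
  pair : ob -> ty -> hom -> tm -> hom }.

Definition is_terminal (C : cwf) (X : ob C) : Prop :=
  isOb X /\ forall G, isOb G ->
    exists f, isHom G X f /\ forall g, isHom G X g -> g = f.

Definition qq (C : cwf) (D G : ob C) (A : ty C) (f : hom C) : hom C :=
  pair G A (comp f (pp D (tsub A f))) (vv D (tsub A f)).

Section IsCwf.
Variable C : cwf.
Local Notation isOb := (@isOb C).
Local Notation isHom := (@isHom C).
Local Notation isTy := (@isTy C).
Local Notation isTm := (@isTm C).
Local Notation comp := (@comp C).
Local Notation idm := (@idm C).
Local Notation tsub := (@tsub C).
Local Notation msub := (@msub C).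
Local Notation ext := (@ext C).
Local Notation pp := (@pp C).
Local Notation vv := (@vv C).
Local Notation pair := (@pair C).
Record is_cwf : Prop := {
  cw_hom_ob : forall D G f, isHom D G f -> isOb D /\ isOb G;
  cw_comp_hom : forall E D G g f, isHom D G g -> isHom E D f -> isHom E G (comp g f);
  cw_id_hom : forall G, isOb G -> isHom G G (idm G);
  cw_comp_assoc : forall X E D G h g f, isHom D G h -> isHom E D g -> isHom X E f ->
      comp h (comp g f) = comp (comp h g) f;
  cw_id_l : forall D G f, isHom D G f -> comp (idm G) f = f;
  cw_id_r : forall D G f, isHom D G f -> comp f (idm D) = f;
  cw_terminal : is_terminal (one C);
  cw_ty_ob : forall G A, isTy G A -> isOb G;
  cw_tsub_ty : forall D G A f, isTy G A -> isHom D G f -> isTy D (tsub A f);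
  cw_tsub_id : forall G A, isTy G A -> tsub A (idm G) = A;
  cw_tsub_comp : forall E D G A f g, isTy G A -> isHom D G f -> isHom E D g ->
      tsub A (comp f g) = tsub (tsub A f) g;
  cw_tm_ty : forall G A a, isTm G A a -> isTy G A;
  cw_msub_tm : forall D G A a f, isTm G A a -> isHom D G f ->
      isTm D (tsub A f) (msub a f);
  cw_msub_id : forall G A a, isTm G A a -> msub a (idm G) = a;
  cw_msub_comp : forall E D G A a f g, isTm G A a -> isHom D G f -> isHom E D g ->
      msub a (comp f g) = msub (msub a f) g;
  cw_ext_ob : forall G A, isTy G A -> isOb (ext G A);
  cw_pp_hom : forall G A, isTy G A -> isHom (ext G A) G (pp G A);
  cw_vv_tm : forall G A, isTy G A -> isTm (ext G A) (tsub A (pp G A)) (vv G A);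
  cw_pair_hom : forall D G A f a, isTy G A -> isHom D G f -> isTm D (tsub A f) a ->
      isHom D (ext G A) (pair G A f a);
  cw_pp_pair : forall D G A f a, isTy G A -> isHom D G f -> isTm D (tsub A f) a ->
      comp (pp G A) (pair G A f a) = f;
  cw_vv_pair : forall D G A f a, isTy G A -> isHom D G f -> isTm D (tsub A f) a ->
      msub (vv G A) (pair G A f a) = a;
  cw_pair_eta : forall D G A h, isTy G A -> isHom D (ext G A) h ->
      pair G A (comp (pp G A) h) (msub (vv G A) h) = h;
  cw_pair_comp : forall E D G A f a g, isTy G A -> isHom D G f ->
      isTm D (tsub A f) a -> isHom E D g ->
      comp (pair G A f a) g = pair G A (comp f g) (msub a g) }.
End IsCwf.

Record cwf_morph (C C' : cwf) := CwfMorph {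
  Fob : ob C -> ob C';
  Fhom : hom C -> hom C';
  Fty : ob C -> ty C -> ty C';
  Ftm : ob C -> ty C -> tm C -> tm C' }.

Record is_cwf_morph (C C' : cwf) (M : cwf_morph C C') : Prop := {
  cm_ob : forall G, isOb G -> isOb (Fob M G);
  cm_hom : forall D G f, isHom D G f -> isHom (Fob M D) (Fob M G) (Fhom M f);
  cm_comp : forall E D G g f, isHom D G g -> isHom E D f ->
      Fhom M (comp g f) = comp (Fhom M g) (Fhom M f);
  cm_id : forall G, isOb G -> Fhom M (idm G) = idm (Fob M G);
  cm_terminal : is_terminal (Fob M (one C));
  cm_ty : forall G A, isTy G A -> isTy (Fob M G) (Fty M G A);
  cm_ty_sub : forall D G A f, isTy G A -> isHom D G f ->
      Fty M D (tsub A f) = tsub (Fty M G A) (Fhom M f);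
  cm_ext : forall G A, isTy G A -> Fob M (ext G A) = ext (Fob M G) (Fty M G A);
  cm_pp : forall G A, isTy G A -> Fhom M (pp G A) = pp (Fob M G) (Fty M G A);
  cm_tm : forall G A a, isTm G A a -> isTm (Fob M G) (Fty M G A) (Ftm M G A a);
  cm_tm_sub : forall D G A a f, isTm G A a -> isHom D G f ->
      Ftm M D (tsub A f) (msub a f) = msub (Ftm M G A a) (Fhom M f);
  cm_vv : forall G A, isTy G A ->
      Ftm M (ext G A) (tsub A (pp G A)) (vv G A) = vv (Fob M G) (Fty M G A);
  cm_pair : forall D G A f a, isTy G A -> isHom D G f -> isTm D (tsub A f) a ->
      Fhom M (pair G A f a) =
      pair (Fob M G) (Fty M G A) (Fhom M f) (Ftm M D (tsub A f) a) }.

(* Heyting prealgebras (preorders, not necessarily antisymmetric), given as *)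
(* a membership predicate X on an ambient type.                             *)
Record is_heyting (A : Type) (X : A -> Prop) (le : A -> A -> Prop)
    (top bot : A) (meet join imp : A -> A -> A) : Prop := {
  hy_refl : forall x, X x -> le x x;
  hy_trans : forall x y z, X x -> X y -> X z -> le x y -> le y z -> le x z;
  hy_top_in : X top;
  hy_bot_in : X bot;
  hy_meet_in : forall x y, X x -> X y -> X (meet x y);
  hy_join_in : forall x y, X x -> X y -> X (join x y);
  hy_imp_in : forall x y, X x -> X y -> X (imp x y);
  hy_bot : forall x, X x -> le bot x;
  hy_top : forall x, X x -> le x top;
  hy_meet : forall x y z, X x -> X y -> X z -> (le z (meet x y) <-> le z x /\ le z y);
  hy_join : forall x y z, X x -> X y -> X z -> (le (join x y) z <-> le x z /\ le y z);
  hy_imp : forall x y z, X x -> X y -> X z -> (le z (imp x y) <-> le (meet z x) y) }.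

Record is_heyting_morph (A B : Type)
    (X : A -> Prop) (le : A -> A -> Prop) (top bot : A) (meet join imp : A -> A -> A)
    (X' : B -> Prop) (le' : B -> B -> Prop) (top' bot' : B)
    (meet' join' imp' : B -> B -> B) (h : A -> B) : Prop := {
  hm_in : forall x, X x -> X' (h x);
  hm_mono : forall x y, X x -> X y -> le x y -> le' (h x) (h y);
  hm_top : h top = top';
  hm_bot : h bot = bot';
  hm_meet : forall x y, X x -> X y -> h (meet x y) = meet' (h x) (h y);
  hm_join : forall x y, X x -> X y -> h (join x y) = join' (h x) (h y);
  hm_imp : forall x y, X x -> X y -> h (imp x y) = imp' (h x) (h y) }.

Record hdoc (C : cwf) := HDoc {
  pr : Type;
  isPr : ob C -> pr -> Prop;
  ple : ob C -> pr -> pr -> Prop;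
  ptop : ob C -> pr;
  pbot : ob C -> pr;
  pand : ob C -> pr -> pr -> pr;
  por : ob C -> pr -> pr -> pr;
  pimp : ob C -> pr -> pr -> pr;
  psub : pr -> hom C -> pr;
  pall : ob C -> ty C -> pr -> pr;
  pex : ob C -> ty C -> pr -> pr }.
Arguments isPr {C} h _ _.
Arguments ple {C} h _ _ _.
Arguments ptop {C} h _.
Arguments pbot {C} h _.
Arguments pand {C} h _ _ _.
Arguments por {C} h _ _ _.
Arguments pimp {C} h _ _ _.
Arguments pall {C} h _ _ _.
Arguments pex {C} h _ _ _.
Arguments psub {C h} _ _.

Section IsHdoc.
Variable C : cwf.
Variable H : hdoc C.
Local Notation isOb := (@isOb C).
Local Notation isHom := (@isHom C).
Local Notation isTy := (@isTy C).
Local Notation comp := (@comp C).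
Local Notation idm := (@idm C).
Local Notation tsub := (@tsub C).
Local Notation ext := (@ext C).
Local Notation pp := (@pp C).
Local Notation psub := (@psub C H).
Record is_hdoc : Prop := {
  hd_heyting : forall G, isOb G ->
      is_heyting (isPr H G) (ple H G) (ptop H G) (pbot H G)
                 (pand H G) (por H G) (pimp H G);
  hd_sub : forall D G f, isHom D G f ->
      is_heyting_morph (isPr H G) (ple H G) (ptop H G) (pbot H G)
                       (pand H G) (por H G) (pimp H G)
                       (isPr H D) (ple H D) (ptop H D) (pbot H D)
                       (pand H D) (por H D) (pimp H D)
                       (fun R => psub R f);
  hd_sub_id : forall G R, isOb G -> isPr H G R -> psub R (idm G) = R;
  hd_sub_comp : forall E D G g f R, isHom D G g -> isHom E D f -> isPr H G R ->
      psub R (comp g f) = psub (psub R g) f;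
  hd_all_in : forall G S R, isTy G S -> isPr H (ext G S) R -> isPr H G (pall H G S R);
  hd_ex_in : forall G S R, isTy G S -> isPr H (ext G S) R -> isPr H G (pex H G S R);
  hd_all_mono : forall G S R R', isTy G S -> isPr H (ext G S) R -> isPr H (ext G S) R' ->
      ple H (ext G S) R R' -> ple H G (pall H G S R) (pall H G S R');
  hd_ex_mono : forall G S R R', isTy G S -> isPr H (ext G S) R -> isPr H (ext G S) R' ->
      ple H (ext G S) R R' -> ple H G (pex H G S R) (pex H G S R');
  hd_all_adj : forall G S Q R, isTy G S -> isPr H G Q -> isPr H (ext G S) R ->
      (ple H G Q (pall H G S R) <-> ple H (ext G S) (psub Q (pp G S)) R);
  hd_ex_adj : forall G S Q R, isTy G S -> isPr H G Q -> isPr H (ext G S) R ->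
      (ple H G (pex H G S R) Q <-> ple H (ext G S) R (psub Q (pp G S)));
  hd_all_bc : forall D G S R f, isTy G S -> isHom D G f -> isPr H (ext G S) R ->
      psub (pall H G S R) f = pall H D (tsub S f) (psub R (qq D G S f));
  hd_ex_bc : forall D G S R f, isTy G S -> isHom D G f -> isPr H (ext G S) R ->
      psub (pex H G S R) f = pex H D (tsub S f) (psub R (qq D G S f)) }.
End IsHdoc.

Record is_Fmorph (C C' : cwf) (M : cwf_morph C C') (H : hdoc C) (H' : hdoc C')
    (Gm : ob C -> pr H -> pr H') : Prop := {
  fm_heyting : forall G, isOb G ->
      is_heyting_morph (isPr H G) (ple H G) (ptop H G) (pbot H G)
                       (pand H G) (por H G) (pimp H G)
                       (isPr H' (Fob M G)) (ple H' (Fob M G)) (ptop H' (Fob M G))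
                       (pbot H' (Fob M G)) (pand H' (Fob M G)) (por H' (Fob M G))
                       (pimp H' (Fob M G)) (Gm G);
  fm_sub : forall D G f R, isHom D G f -> isPr H G R ->
      Gm D (psub R f) = psub (Gm G R) (Fhom M f);
  fm_all : forall G S R, isTy G S -> isPr H (ext G S) R ->
      Gm G (pall H G S R) = pall H' (Fob M G) (Fty M G S) (Gm (ext G S) R);
  fm_ex : forall G S R, isTy G S -> isPr H (ext G S) R ->
      Gm G (pex H G S R) = pex H' (Fob M G) (Fty M G S) (Gm (ext G S) R) }.

Arguments is_Fmorph {C C'} M H H' Gm.

(* Morphisms are triples (D, G, as); types pairs (G, A); terms ((G,A), a);  *)
(* predicates pairs (G, phi).                                               *)
Section TermModel.
Variable L : lang.
Variable Sg : sig L.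

Definition FS_hom := (ctx L * ctx L * seq (term L))%type.

Definition FS_ext (G : ctx L) (A : ctx L * pty L) : ctx L := rcons G (fresh G, A.2).

Definition FSigma : cwf := {|
  ob := ctx L;
  isOb := ctxJ Sg;
  hom := FS_hom;
  isHom := fun D G f => f.1.1 = D /\ f.1.2 = G /\ substJ Sg D G f.2;
  comp := fun g f => (f.1.1, g.1.2, seq_sub f.1.2 f.2 g.2);
  idm := fun G => (G, G, map Var (OV G));
  one := [::];
  ty := (ctx L * pty L)%type;
  isTy := fun G A => A.1 = G /\ tyJ Sg G A.2;
  tsub := fun A f => (f.1.1, ty_sub f.1.2 f.2 A.2);
  ext := FS_ext;
  pp := fun G A => (FS_ext G A, G, map Var (OV G));
  tm := ((ctx L * pty L) * term L)%type;
  isTm := fun G A a => a.1 = A /\ A.1 = G /\ tmJ Sg G a.2 A.2;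
  msub := fun a f => ((f.1.1, ty_sub f.1.2 f.2 a.1.2), tm_sub f.1.2 f.2 a.2);
  vv := fun G A => ((FS_ext G A, A.2), Var (fresh G));
  pair := fun G A f a => (f.1.1, FS_ext G A, rcons f.2 a.2) |}.

Variable Pi : psig L.
Variable Th : ctx L -> form L -> form L -> Prop.

Definition LT : hdoc FSigma :=
  @HDoc FSigma (ctx L * form L)%type
    (fun (G : ctx L) (R : ctx L * form L) => R.1 = G /\ formJ Sg Pi G R.2)
    (fun (G : ctx L) (R R' : ctx L * form L) => thm Sg Pi Th G R.2 R'.2)
    (fun (G : ctx L) => (G, FTop))
    (fun (G : ctx L) => (G, FBot))
    (fun (G : ctx L) (R R' : ctx L * form L) => (G, FAnd R.2 R'.2))
    (fun (G : ctx L) (R R' : ctx L * form L) => (G, FOr R.2 R'.2))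
    (fun (G : ctx L) (R R' : ctx L * form L) => (G, FImp R.2 R'.2))
    (fun (R : ctx L * form L) (f : FS_hom) => (f.1.1, fsub f.1.1 f.1.2 f.2 R.2))
    (fun (G : ctx L) (A : ctx L * pty L) (R : ctx L * form L) =>
       (G, FAll (fresh G) A.2 R.2))
    (fun (G : ctx L) (A : ctx L * pty L) (R : ctx L * form L) =>
       (G, FEx (fresh G) A.2 R.2)).

End TermModel.

From Pilot Require Import Defs.
From HB Require Import structures.
From mathcomp Require Import all_boot.

(* Every well-formed formula is built by connectives and quantifiers from atoms
   R(a_1, ..., a_n).  For a declaration (Gamma, R) on standard form such an atom
   is the substitution instance R(OV Gamma){(Delta, Gamma, a)} of the generic
   atom.  An F-based morphism commutes with substitution, with the Heyting
   operations and with the quantifiers, so by induction on the formation of a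
   formula its value is determined by the values on generic atoms. *)

Section Substitution.
Context {L : lang}.

Lemma OV_sub_ctxvars (G : ctx L) : {subset OV G <= ctxvars G}.
Proof.
elim: G => [|[x A] G IH] v //=.
rewrite /ctxvars /= !inE mem_cat => /orP[->//|/IH vG].
by rewrite /ctxvars in vG; rewrite vG !orbT.
Qed.

Lemma tsubst_Var (s : lV L -> term L) : s =1 Var -> forall t, tsubst s t = t.
Proof.
move=> sV; fix IH 1 => -[v|f ts] /=; first exact: sV.
by congr App; elim: ts => //= t ts ->; rewrite IH.
Qed.

Lemma sub_of_Var (xs : seq (lV L)) : sub_of xs (map Var xs) =1 Var.
Proof.
move=> v; rewrite /sub_of; case: ifP => // vxs.
by rewrite (nth_map v) ?index_mem // nth_index.
Qed.

Lemma ty_sub_OV (G : ctx L) (A : pty L) : ty_sub G (map Var (OV G)) A = A.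
Proof.
case: A => S ts; rewrite /ty_sub /=; congr (_, _).
rewrite -[RHS]map_id; apply: eq_map => t.
by rewrite /tm_sub tsubst_Var //; apply: sub_of_Var.
Qed.

(* Qualified because fintype's [seq_sub] shadows the substitution of Defs. *)
Lemma seq_sub_OV (G : ctx L) (as_ : seq (term L)) :
  uniq (OV G) -> size as_ = size G -> Defs.seq_sub G as_ (map Var (OV G)) = as_.
Proof.
move=> uniqG sz; have x0 : lV L := lfr [::].
apply: (@eq_from_nth _ (Var x0)); first by rewrite !size_map sz.
move=> i; rewrite !size_map => iG; have iOV : i < size (OV G) by rewrite size_map.
rewrite (nth_map (Var x0)) ?size_map // (nth_map x0) //= /tm_sub /= /sub_of.
by rewrite mem_nth // index_uniq //; apply: set_nth_default; rewrite sz.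
Qed.

Lemma sel_iota (as_ : seq (term L)) : sel as_ (iota 0 (size as_)) = as_.
Proof. by rewrite /sel -/(mkseq _ _) mkseq_nth. Qed.

Context {Sg : sig L}.

(* The variable added by R2 is [fresh G], which lies outside [ctxvars G]. *)
Lemma ctxJ_OV_uniq {G : ctx L} : ctxJ Sg G -> uniq (OV G).
Proof.
elim=> // {}G A _ uniqG _.
rewrite /OV map_rcons rcons_uniq -/(OV G) uniqG andbT.
apply/negP => /OV_sub_ctxvars freshG.
by move: (lfr_fresh (ctxvars G)); rewrite -/(fresh G) freshG.
Qed.

Lemma substJ_size {D G : ctx L} {as_ : seq (term L)} :
  substJ Sg D G as_ -> size as_ = size G.
Proof. by case. Qed.

Lemma substJ_ctxJ_cod {D G : ctx L} {as_ : seq (term L)} :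
  substJ Sg D G as_ -> ctxJ Sg G.
Proof. by case. Qed.

Lemma substJ_OV {G : ctx L} : ctxJ Sg G -> substJ Sg G G (map Var (OV G)).
Proof.
move=> ctxG; apply: SubstJ => //; first by rewrite !size_map.
move=> G1 G2 x A bs cs a EG Eas szbs; subst G.
have OVG : map Var (OV (G1 ++ (x, A) :: G2)) =
             map Var (OV G1) ++ Var x :: map Var (OV G2) by rewrite /OV !map_cat.
have szOV : size (map Var (OV G1)) = size bs by rewrite !size_map.
have [-> ->] : bs = map Var (OV G1) /\ a = Var x.
  split; [move/(congr1 (take (size bs))): Eas | move/(congr1 (nth a ^~ (size bs))): Eas];
    by rewrite OVG ?take_size_cat ?nth_cat ?szOV ?ltnn ?subnn.
by rewrite ty_sub_OV; apply: R3.
Qed.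

Context {Pi : psig L}.

Definition generic_atom (G : ctx L) (R : lP L) : form L := FAtom R (map Var (OV G)).

Lemma formJ_generic_atom {G : ctx L} {R : lP L} :
  Pi R = Some (G, iota 0 (size G)) -> ctxJ Sg G -> formJ Sg Pi G (generic_atom G R).
Proof.
move=> PiR ctxG; have := FJatom PiR (substJ_OV ctxG).
have szG : size G = size (map Var (OV G)) by rewrite !size_map.
by rewrite szG sel_iota.
Qed.

Lemma atom_fsub_generic {Dl G : ctx L} (R : lP L) {as_ : seq (term L)} :
  substJ Sg Dl G as_ ->
  FAtom R (sel as_ (iota 0 (size G))) = fsub Dl G as_ (generic_atom G R).
Proof.
move=> sJ; have uniqG := ctxJ_OV_uniq (substJ_ctxJ_cod sJ).
by rewrite /= seq_sub_OV ?(substJ_size sJ) // -(substJ_size sJ) sel_iota.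
Qed.

End Substitution.

Section FmorphFormulas.
Context {L : lang} {Sg : sig L} {Pi : psig L} {Th : ctx L -> form L -> form L -> Prop}.
Context {C : cwf} {M : cwf_morph (FSigma Sg) C} {D : hdoc C}.
Context {Gm : ctx L -> ctx L * form L -> pr D}.
Hypothesis HG : is_Fmorph M (LT Sg Pi Th) D Gm.

Lemma Fmorph_FBot {G : ctx L} : ctxJ Sg G -> Gm G (G, FBot) = pbot D (Fob M G).
Proof. by move=> ctxG; apply: (hm_bot (fm_heyting HG ctxG)). Qed.

Lemma Fmorph_FTop {G : ctx L} : ctxJ Sg G -> Gm G (G, FTop) = ptop D (Fob M G).
Proof. by move=> ctxG; apply: (hm_top (fm_heyting HG ctxG)). Qed.

Lemma Fmorph_FAnd {G : ctx L} {a b : form L} :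
  ctxJ Sg G -> formJ Sg Pi G a -> formJ Sg Pi G b ->
  Gm G (G, FAnd a b) = pand D (Fob M G) (Gm G (G, a)) (Gm G (G, b)).
Proof. by move=> ctxG fa fb; apply: (hm_meet (fm_heyting HG ctxG) (x := (G, a)) (y := (G, b))).
Qed.

Lemma Fmorph_FOr {G : ctx L} {a b : form L} :
  ctxJ Sg G -> formJ Sg Pi G a -> formJ Sg Pi G b ->
  Gm G (G, FOr a b) = por D (Fob M G) (Gm G (G, a)) (Gm G (G, b)).
Proof. by move=> ctxG fa fb; apply: (hm_join (fm_heyting HG ctxG) (x := (G, a)) (y := (G, b))).
Qed.

Lemma Fmorph_FImp {G : ctx L} {a b : form L} :
  ctxJ Sg G -> formJ Sg Pi G a -> formJ Sg Pi G b ->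
  Gm G (G, FImp a b) = pimp D (Fob M G) (Gm G (G, a)) (Gm G (G, b)).
Proof. by move=> ctxG fa fb; apply: (hm_imp (fm_heyting HG ctxG) (x := (G, a)) (y := (G, b))).
Qed.

Lemma Fmorph_FAll {G : ctx L} {A : pty L} {phi : form L} :
  let GA := rcons G (fresh G, A) in
  tyJ Sg G A -> formJ Sg Pi GA phi ->
  Gm G (G, FAll (fresh G) A phi) = pall D (Fob M G) (Fty M G (G, A)) (Gm GA (GA, phi)).
Proof. by move=> GA tyA fphi; apply: (fm_all HG (S := (G, A)) (R := (GA, phi))). Qed.

Lemma Fmorph_FEx {G : ctx L} {A : pty L} {phi : form L} :
  let GA := rcons G (fresh G, A) in
  tyJ Sg G A -> formJ Sg Pi GA phi ->
  Gm G (G, FEx (fresh G) A phi) = pex D (Fob M G) (Fty M G (G, A)) (Gm GA (GA, phi)).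
Proof. by move=> GA tyA fphi; apply: (fm_ex HG (S := (G, A)) (R := (GA, phi))). Qed.

Lemma Fmorph_FAtom {Dl G : ctx L} {R : lP L} {as_ : seq (term L)} :
  Pi R = Some (G, iota 0 (size G)) -> substJ Sg Dl G as_ ->
  Gm Dl (Dl, FAtom R (sel as_ (iota 0 (size G)))) =
  psub (Gm G (G, generic_atom G R)) (Fhom M (Dl, G, as_)).
Proof.
move=> PiR sJ; rewrite (atom_fsub_generic R sJ).
have homA : @isHom (FSigma Sg) Dl G (Dl, G, as_) by [].
have prR : isPr (LT Sg Pi Th) G (G, generic_atom G R).
  by split=> //; apply: formJ_generic_atom PiR (substJ_ctxJ_cod sJ).
exact: (fm_sub HG homA prR).
Qed.

End FmorphFormulas.

Section Uniqueness.
Context {L : lang} {Sg : sig L} {Pi : psig L} {Th : ctx L -> form L -> form L -> Prop}.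
Context {C : cwf} {M : cwf_morph (FSigma Sg) C} {D : hdoc C}.
Context {Gm Gm' : ctx L -> ctx L * form L -> pr D}.
Hypothesis HG : is_Fmorph M (LT Sg Pi Th) D Gm.
Hypothesis HG' : is_Fmorph M (LT Sg Pi Th) D Gm'.
Hypothesis Pi_standard : forall R G idx, Pi R = Some (G, idx) -> standard G idx.
Hypothesis agree_on_generic_atoms : forall R G idx, Pi R = Some (G, idx) ->
  Gm G (G, generic_atom G R) = Gm' G (G, generic_atom G R).

Lemma Fmorph_eq_formJ {G : ctx L} {phi : form L} :
  ctxJ Sg G -> formJ Sg Pi G phi -> Gm G (G, phi) = Gm' G (G, phi).
Proof.
move=> ctxG fphi; elim: fphi ctxG => {G phi}.
- move=> G idx R Dl as_ PiR sJ _.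
  have idxE : idx = _ := Pi_standard _ _ _ PiR; subst idx.
  rewrite (Fmorph_FAtom HG PiR sJ) (Fmorph_FAtom HG' PiR sJ).
  by rewrite (agree_on_generic_atoms _ _ _ PiR).
- by move=> G _ ctxG; rewrite (Fmorph_FBot HG ctxG) (Fmorph_FBot HG' ctxG).
- by move=> G _ ctxG; rewrite (Fmorph_FTop HG ctxG) (Fmorph_FTop HG' ctxG).
- move=> G a b fa IHa fb IHb ctxG.
  by rewrite (Fmorph_FAnd HG ctxG fa fb) (Fmorph_FAnd HG' ctxG fa fb) IHa // IHb.
- move=> G a b fa IHa fb IHb ctxG.
  by rewrite (Fmorph_FOr HG ctxG fa fb) (Fmorph_FOr HG' ctxG fa fb) IHa // IHb.
- move=> G a b fa IHa fb IHb ctxG.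
  by rewrite (Fmorph_FImp HG ctxG fa fb) (Fmorph_FImp HG' ctxG fa fb) IHa // IHb.
- move=> G x A phi tyA -> fphi IH ctxG.
  by rewrite (Fmorph_FAll HG tyA fphi) (Fmorph_FAll HG' tyA fphi) IH //; apply: R2.
- move=> G x A phi tyA -> fphi IH ctxG.
  by rewrite (Fmorph_FEx HG tyA fphi) (Fmorph_FEx HG' tyA fphi) IH //; apply: R2.
Qed.

End Uniqueness.

Theorem mainTheorem18
  (L : lang) (Sg : sig L) (Pi : psig L) (Th : ctx L -> form L -> form L -> Prop)
  (HSg : is_signature Sg) (HPi : is_psig Sg Pi) (HTh : is_theory Sg Pi Th)
  (HstdT : forall (S : lT L) (G : ctx L) (idx : seq nat),
             sT Sg S = Some (G, idx) -> standard G idx)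
  (HstdF : forall (f : lF L) (G : ctx L) (idx : seq nat) (U : pty L),
             sF Sg f = Some (G, idx, U) -> standard G idx)
  (HstdP : forall (R : lP L) (G : ctx L) (idx : seq nat),
             Pi R = Some (G, idx) -> standard G idx)
  (C : cwf) (HC : is_cwf C)
  (M : cwf_morph (FSigma Sg) C) (HM : is_cwf_morph M)
  (D : hdoc C) (HD : is_hdoc D)
  (Gm Gm' : ctx L -> ctx L * form L -> pr D)
  (HG : is_Fmorph M (LT Sg Pi Th) D Gm)
  (HG' : is_Fmorph M (LT Sg Pi Th) D Gm')
  (Hatom : forall (R : lP L) (G : ctx L) (idx : seq nat),
     Pi R = Some (G, idx) ->
     Gm G (G, FAtom R (map Var (OV G))) = Gm' G (G, FAtom R (map Var (OV G)))) :
  forall (Dl : ctx L) (P : ctx L * form L),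
    ctxJ Sg Dl -> isPr (LT Sg Pi Th) Dl P -> Gm Dl P = Gm' Dl P.
Proof.
move=> Dl [_ phi] ctxDl [/= -> fphi].
exact: (Fmorph_eq_formJ HG HG' HstdP Hatom ctxDl fphi).
Qed.
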